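(* Let $G$ act by isometries on a $\delta$-hyperbolic geodesic space $X$, let $\alpha\ge3\delta$ and let $U\subset G$ be $\alpha$-reduced at $p\in X$. Let $w\equiv u_1\cdots u_m$ and $w'\equiv u'_1\cdots u'_{m'}$ be elements of $\mathbf F(U)$ written in reduced form ($m\ge1$). If $(p,w'p)_{wp}\le\frac12|u_mp-p|$, then $w$ is a prefix of $w'$.
   Context: Hyperbolicity: $(x,z)_t\ge\min\{(x,y)_t,(y,z)_t\}-\delta$, $(x,y)_z=\frac12(|x-z|+|y-z|-|x-y|)$. $U$ finite is $\alpha$-reduced at $p$ if $U\cap U^{-1}=\varnothing$ and for distinct $u_1,u_2\in U\sqcup U^{-1}$, $(u_1p,u_2p)_p<\frac12\min\{|u_1p-p|,|u_2p-p|\}-\alpha-50\delta$. $\mathbf F(U)$ is the free group on $U$; its elements act on $X$ via their images in $G$. *)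

From Stdlib Require Import Reals List.
Import ListNotations.
Open Scope R_scope.

Record Group := {
  gcar :> Type;
  gmul : gcar -> gcar -> gcar;
  gone : gcar;
  ginv : gcar -> gcar;
  gmulA : forall a b c, gmul a (gmul b c) = gmul (gmul a b) c;
  gmul1l : forall a, gmul gone a = a;
  gmulVl : forall a, gmul (ginv a) a = gone
}.
Arguments gmul {_}. Arguments gone {_}. Arguments ginv {_}.

Record MetricSpace := {
  mcar :> Type;
  mdist : mcar -> mcar -> R;
  dist_refl : forall x, mdist x x = 0;
  dist_eq0 : forall x y, mdist x y = 0 -> x = y;
  dist_sym : forall x y, mdist x y = mdist y x;
  dist_tri : forall x y z, mdist x z <= mdist x y + mdist y z
}.
Arguments mdist {_}.

Definition gromov {X : MetricSpace} (x y z : X) : R :=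
  (mdist x z + mdist y z - mdist x y) / 2.

Definition geodesic (X : MetricSpace) : Prop :=
  forall x y : X, exists g : R -> X,
    g 0 = x /\ g (mdist x y) = y /\
    forall s t, 0 <= s <= mdist x y -> 0 <= t <= mdist x y ->
      mdist (g s) (g t) = Rabs (s - t).

Definition hyperbolic (X : MetricSpace) (delta : R) : Prop :=
  forall x y z t : X, gromov x z t >= Rmin (gromov x y t) (gromov y z t) - delta.

Definition isometric_action (G : Group) (X : MetricSpace) (act : G -> X -> X) : Prop :=
  (forall x, act gone x = x) /\
  (forall g h x, act (gmul g h) x = act g (act h x)) /\
  (forall g x y, mdist (act g x) (act g y) = mdist x y).

(* Letters of F(U): elements of U ⊔ U^{-1}, represented by their images in G
   (faithful since U ∩ U^{-1} = ∅ is part of being reduced). *)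
Definition letter {G : Group} (U : list G) (s : G) : Prop :=
  In s U \/ exists u, In u U /\ s = ginv u.

Definition alpha_reduced (G : Group) (X : MetricSpace) (act : G -> X -> X)
    (delta alpha : R) (U : list G) (p : X) : Prop :=
  (forall u, In u U -> ~ In (ginv u) U) /\
  (forall u1 u2, letter U u1 -> letter U u2 -> u1 <> u2 ->
     gromov (act u1 p) (act u2 p) p <
       Rmin (mdist (act u1 p) p) (mdist (act u2 p) p) / 2 - alpha - 50 * delta).

Definition reduced_word {G : Group} (U : list G) (w : list G) : Prop :=
  Forall (letter U) w /\
  ~ (exists l1 a b l2, w = l1 ++ a :: b :: l2 /\ b = ginv a).

Definition word_eval {G : Group} (w : list G) : G := fold_right gmul gone w.

(* Along a reduced word a1 a2 ... the orbit point a1 ... ak p moves away from p in the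
   direction of a1 p: by induction on the word, using that distinct letters have small
   Gromov products at p, one gets (a1 p, a1 ... ak p)_p > |a1 p - p|/2 + delta.
   If w' does not extend w = c x s, write w' = c t with t not starting with x; then
   w^-1 and w^-1 w' are both reduced words starting with u_m^-1, so seen from w p the
   points p and w' p both lie far along the direction of w u_m^-1 p, and
   delta-hyperbolicity forces (p, w' p)_{w p} > |u_m p - p|/2. *)

From Pilot Require Import Defs.
From Stdlib Require Import Reals List Lra Classical.
Import ListNotations.
Open Scope R_scope.

Set Implicit Arguments.
Unset Strict Implicit.

Section GroupFacts.
Variable G : Group.

Lemma gmulVr (a : G) : gmul a (ginv a) = gone.
Proof.
  assert (H : gmul (ginv (ginv a)) (gmul (ginv a) (gmul a (ginv a))) = gone).
  { rewrite (gmulA _ (ginv a) a), gmulVl, gmul1l, gmulVl. reflexivity. }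
  rewrite gmulA, gmulVl, gmul1l in H. exact H.
Qed.

Lemma gmul1r (a : G) : gmul a gone = a.
Proof. rewrite <- (gmulVl _ a), gmulA, gmulVr, gmul1l. reflexivity. Qed.

Lemma ginvK (a : G) : ginv (ginv a) = a.
Proof.
  rewrite <- (gmul1r (ginv (ginv a))), <- (gmulVl _ a), gmulA, gmulVl, gmul1l.
  reflexivity.
Qed.

End GroupFacts.

Section Words.
Variables (G : Group) (U : list G).

Definition word_inv (w : list G) : list G := rev (map ginv w).

Lemma word_inv_cons (a : G) w : word_inv (a :: w) = word_inv w ++ [ginv a].
Proof. reflexivity. Qed.

Lemma word_inv_app (w1 w2 : list G) : word_inv (w1 ++ w2) = word_inv w2 ++ word_inv w1.
Proof. unfold word_inv. rewrite map_app, rev_app_distr. reflexivity. Qed.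

Lemma word_inv_rcons w (a : G) : word_inv (w ++ [a]) = ginv a :: word_inv w.
Proof. rewrite word_inv_app. reflexivity. Qed.

Lemma word_invK (w : list G) : word_inv (word_inv w) = w.
Proof.
  unfold word_inv. rewrite map_rev, rev_involutive, map_map.
  rewrite (map_ext _ _ (@ginvK G)). apply map_id.
Qed.

Lemma word_eval_app (w1 w2 : list G) :
  word_eval (w1 ++ w2) = gmul (word_eval w1) (word_eval w2).
Proof.
  induction w1 as [|a w1 IH]; simpl.
  - rewrite gmul1l. reflexivity.
  - rewrite IH, gmulA. reflexivity.
Qed.

Lemma word_eval_invr (w : list G) : gmul (word_eval w) (word_eval (word_inv w)) = gone.
Proof.
  induction w as [|a w IH]; simpl.
  - apply gmul1l.
  - rewrite word_inv_cons, word_eval_app. simpl.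
    rewrite gmul1r, <- gmulA, (gmulA _ (word_eval w)), IH, gmul1l. apply gmulVr.
Qed.

Lemma letter_inv (a : G) : letter U a -> letter U (ginv a).
Proof.
  intros [Ha | [u [Hu ->]]].
  - right. exists a. auto.
  - left. rewrite ginvK. exact Hu.
Qed.

Lemma reduced_word_app_r (w1 w2 : list G) : reduced_word U (w1 ++ w2) -> reduced_word U w2.
Proof.
  intros [Hl Hc]. split.
  - apply Forall_app in Hl. tauto.
  - intros [l1 [a [b [l2 [E Eb]]]]]. apply Hc.
    exists (w1 ++ l1), a, b, l2. rewrite E, <- app_assoc. auto.
Qed.

Lemma reduced_word_cons_letter (a : G) w : reduced_word U (a :: w) -> letter U a.
Proof. intros [Hl _]. inversion Hl. assumption. Qed.

Lemma reduced_word_cons2 (a b : G) w : reduced_word U (a :: b :: w) -> b <> ginv a.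
Proof. intros [_ Hc] Eb. apply Hc. exists [], a, b, w. auto. Qed.

Lemma reduced_word_inv (w : list G) : reduced_word U w -> reduced_word U (word_inv w).
Proof.
  intros [Hl Hc]. split.
  - apply Forall_rev, Forall_map. eapply Forall_impl; [exact letter_inv | exact Hl].
  - intros [l1 [a [b [l2 [E Eb]]]]]. apply Hc.
    exists (word_inv l2), (ginv b), (ginv a), (word_inv l1). split.
    + rewrite <- (word_invK w), E, word_inv_app, !word_inv_cons, <- !app_assoc.
      reflexivity.
    + rewrite Eb, ginvK. reflexivity.
Qed.

Lemma reduced_word_app (w1 w2 : list G) :
  reduced_word U w1 -> reduced_word U w2 ->
  (forall w1' a b w2', w1 = w1' ++ [a] -> w2 = b :: w2' -> b <> ginv a) ->
  reduced_word U (w1 ++ w2).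
Proof.
  intros [Hl1 Hc1] [Hl2 Hc2] Hjoin. split; [apply Forall_app; auto|].
  intros [l1 [a [b [l2 [E Eb]]]]].
  destruct (app_eq_app _ _ _ _ E) as [l [[-> E2] | [-> ->]]].
  - destruct l as [|a' [|b' l]]; simpl in E2.
    + apply Hc2. exists [], a, b, l2. auto.
    + injection E2 as <- <-. exact (Hjoin l1 a b l2 eq_refl eq_refl Eb).
    + injection E2 as <- <- _. apply Hc1. exists l1, a, b, l. auto.
  - apply Hc2. exists l, a, b, l2. auto.
Qed.

Lemma prefix_or_diverge (w w' : list G) :
  (exists l, w' = w ++ l) \/
  exists c x s t, w = c ++ x :: s /\ w' = c ++ t /\ forall y t', t = y :: t' -> y <> x.
Proof.
  revert w'. induction w as [|x s IH]; intro w'.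
  - left. exists w'. reflexivity.
  - destruct w' as [|y t].
    + right. exists [], x, s, []. repeat split; discriminate.
    + destruct (classic (y = x)) as [<- | Hyx].
      * destruct (IH t) as [[l ->] | [c [x' [s' [t' [-> [-> Ht']]]]]]].
        -- left. exists l. reflexivity.
        -- right. exists (y :: c), x', s', t'. auto.
      * right. exists [], x, s, (y :: t). repeat split.
        intros y' t'' E. injection E as -> _. exact Hyx.
Qed.

End Words.

Section Action.
Variables (G : Group) (X : MetricSpace) (act : G -> X -> X).
Hypothesis Hact : isometric_action G X act.

Lemma act1 x : act gone x = x.
Proof. apply Hact. Qed.

Lemma actM g h x : act (gmul g h) x = act g (act h x).
Proof. apply Hact. Qed.

Lemma act_dist g x y : mdist (act g x) (act g y) = mdist x y.
Proof. apply Hact. Qed.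

Lemma actKV a x : act a (act (ginv a) x) = x.
Proof. rewrite <- actM, gmulVr, act1. reflexivity. Qed.

Lemma dist_actV a x : mdist (act (ginv a) x) x = mdist (act a x) x.
Proof. rewrite <- (act_dist a), actKV. apply Defs.dist_sym. Qed.

Lemma act_word_eval_invr w x : act (word_eval w) (act (word_eval (word_inv w)) x) = x.
Proof. rewrite <- actM, word_eval_invr, act1. reflexivity. Qed.

Lemma gromov_act g x y z : gromov (act g x) (act g y) (act g z) = gromov x y z.
Proof. unfold gromov. rewrite !act_dist. reflexivity. Qed.

End Action.

Section Gromov.
Variable X : MetricSpace.

Lemma gromov_sym (x y z : X) : gromov x y z = gromov y x z.
Proof. unfold gromov. rewrite (Defs.dist_sym _ x y). lra. Qed.

Lemma gromov_ge0 (x y z : X) : 0 <= gromov x y z.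
Proof.
  unfold gromov. pose proof (Defs.dist_tri _ x z y). rewrite (Defs.dist_sym _ z y) in *. lra.
Qed.

Lemma gromov_xx (x z : X) : gromov x x z = mdist x z.
Proof. unfold gromov. rewrite Defs.dist_refl. lra. Qed.

Lemma gromov_add (x y z : X) : gromov x y z + gromov z y x = mdist x z.
Proof.
  unfold gromov. rewrite (Defs.dist_sym _ z x), (Defs.dist_sym _ z y), (Defs.dist_sym _ y x).
  lra.
Qed.

Variable delta : R.
Hypothesis Hhyp : hyperbolic X delta.

Lemma hyperbolic_delta_ge0 (x : X) : 0 <= delta.
Proof.
  pose proof (Hhyp x x x x) as H. unfold gromov in H. rewrite Defs.dist_refl in H.
  unfold Rmin in H. destruct (Rle_dec _ _); lra.
Qed.

Lemma hyperbolic_gromov_gt (x y z t : X) r :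
  r + delta < gromov x y t -> r + delta < gromov y z t -> r < gromov x z t.
Proof. pose proof (Hhyp x y z t). unfold Rmin in *. destruct (Rle_dec _ _); lra. Qed.

End Gromov.

Section ReducedAction.
Variables (G : Group) (X : MetricSpace) (act : G -> X -> X).
Variables (delta alpha : R) (U : list G) (p : X).
Hypothesis Hact : isometric_action G X act.
Hypothesis Hhyp : hyperbolic X delta.
Hypothesis Halpha : 0 <= alpha.
Hypothesis Hred : alpha_reduced G X act delta alpha U p.

Lemma letter_neq_inv a : letter U a -> a <> ginv a.
Proof.
  destruct Hred as [Hdisj _].
  intros [Ha | [u [Hu ->]]] E.
  - apply (Hdisj a Ha). rewrite <- E. exact Ha.
  - rewrite ginvK in E. apply (Hdisj u Hu). rewrite E. exact Hu.
Qed.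

Lemma reduced_gromov_lt a b : letter U a -> letter U b -> a <> b ->
  gromov (act a p) (act b p) p < mdist (act a p) p / 2 - alpha - 50 * delta.
Proof.
  intros Ha Hb Hab. destruct Hred as [_ H]. pose proof (H a b Ha Hb Hab).
  pose proof (Rmin_l (mdist (act a p) p) (mdist (act b p) p)). lra.
Qed.

Lemma gromov_first_letter_gt a w : reduced_word U (a :: w) ->
  mdist (act a p) p / 2 + delta < gromov (act a p) (act (word_eval (a :: w)) p) p.
Proof.
  pose proof (hyperbolic_delta_ge0 Hhyp p) as Hdelta.
  revert a. induction w as [|b w IH]; intros a Hw;
    pose proof (reduced_word_cons_letter Hw) as Ha.
  - simpl. rewrite gmul1r, gromov_xx.
    pose proof (reduced_gromov_lt Ha (letter_inv Ha) (letter_neq_inv Ha)).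
    pose proof (gromov_ge0 (act a p) (act (ginv a) p) p). lra.
  - set (Y := word_eval (b :: w)). set (y := act Y p). set (z := act (ginv a) p).
    pose proof (IH b (reduced_word_app_r (w1 := [a]) Hw)) as IHb. fold Y y in IHb.
    assert (Hb : letter U b)
      by exact (reduced_word_cons_letter (reduced_word_app_r (w1 := [a]) Hw)).
    assert (Hba : b <> ginv a) by exact (reduced_word_cons2 Hw).
    pose proof (reduced_gromov_lt (letter_inv Ha) Hb (not_eq_sym Hba)) as Hzb.
    pose proof (reduced_gromov_lt Hb (letter_inv Ha) Hba) as Hbz.
    fold z in Hzb, Hbz. rewrite gromov_sym in Hbz.
    (* (y, b p)_p is large, so the four-point condition passes the smallness of
       (z, b p)_p on to (z, y)_p. *)
    assert (Hzy : gromov z y p <= gromov z (act b p) p + delta).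
    { destruct (Rle_or_lt (gromov z y p) (gromov z (act b p) p + delta)) as [H | H];
        [exact H | exfalso].
      assert (gromov z (act b p) p < gromov z (act b p) p); [|lra].
      apply (hyperbolic_gromov_gt Hhyp (y := y)); [lra |].
      rewrite (gromov_sym y). lra. }
    change (word_eval (a :: b :: w)) with (gmul a Y).
    rewrite (actM Hact). fold y.
    replace (gromov (act a p) (act a y) p) with (gromov p y z)
      by (unfold z; rewrite <- (gromov_act Hact a), (actKV Hact); reflexivity).
    rewrite <- (dist_actV Hact a). fold z.
    pose proof (gromov_add p y z). rewrite (Defs.dist_sym _ p z) in *.
    lra.
Qed.

Lemma gromov_last_letter_gt (v t : list G) (u : G) :
  reduced_word U (word_inv (v ++ [u]) ++ t) ->
  mdist (act u p) p / 2 + delta <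
    gromov (act (word_eval (v ++ [u])) (act (ginv u) p)) (act (word_eval t) p)
      (act (word_eval (v ++ [u])) p).
Proof.
  intros Hvt. set (g := word_eval (v ++ [u])).
  rewrite word_inv_rcons in Hvt.
  replace (act (word_eval t) p)
    with (act g (act (word_eval ((ginv u :: word_inv v) ++ t)) p)).
  - rewrite (gromov_act Hact), <- (dist_actV Hact).
    exact (gromov_first_letter_gt Hvt).
  - rewrite <- word_inv_rcons, word_eval_app, (actM Hact).
    unfold g. rewrite (act_word_eval_invr Hact). reflexivity.
Qed.

End ReducedAction.

Theorem mainTheorem11 (G : Group) (X : MetricSpace) (act : G -> X -> X)
  (delta alpha : R) (U : list G) (p : X) (w w' : list G) :
  isometric_action G X act ->
  geodesic X ->
  hyperbolic X delta ->
  alpha >= 3 * delta ->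
  alpha_reduced G X act delta alpha U p ->
  reduced_word U w -> reduced_word U w' ->
  w <> [] ->
  gromov p (act (word_eval w') p) (act (word_eval w) p)
    <= mdist (act (last w gone) p) p / 2 ->
  exists l, w' = w ++ l.
Proof.
  intros Hact _ Hhyp Halpha Hred Hw Hw' _ Hgp.
  destruct (prefix_or_diverge w w') as [Hprefix | [c [x [s [t [Ew [Ew' Ht]]]]]]];
    [exact Hprefix | exfalso].
  assert (Halpha0 : 0 <= alpha) by (pose proof (hyperbolic_delta_ge0 Hhyp p); lra).
  destruct (exists_last (l := x :: s) ltac:(discriminate)) as [s0 [u Exs]].
  assert (Ewu : w = (c ++ s0) ++ [u]) by (rewrite Ew, Exs, app_assoc; reflexivity).
  replace (last w gone) with u in Hgp by (rewrite Ewu, last_last; reflexivity).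
  assert (Hinv_t : reduced_word U (word_inv (s0 ++ [u]) ++ t)).
  { rewrite <- Exs. apply reduced_word_app.
    - apply reduced_word_inv, (reduced_word_app_r (w1 := c)). rewrite <- Ew. exact Hw.
    - apply (reduced_word_app_r (w1 := c)). rewrite <- Ew'. exact Hw'.
    - intros r a b t' Er Et. rewrite word_inv_cons in Er.
      apply app_inj_tail in Er as [_ <-]. rewrite ginvK. exact (Ht b t' Et). }
  pose proof (gromov_last_letter_gt Hact Hhyp Halpha0 Hred Hinv_t) as Hfar_w'.
  assert (Hinv : reduced_word U (word_inv ((c ++ s0) ++ [u]) ++ [])).
  { rewrite app_nil_r, <- Ewu. apply reduced_word_inv. exact Hw. }
  pose proof (gromov_last_letter_gt Hact Hhyp Halpha0 Hred Hinv) as Hfar_p.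
  simpl in Hfar_w', Hfar_p. rewrite (act1 Hact), <- Ewu in Hfar_p.
  rewrite <- (gromov_act Hact (word_eval c)), <- !(actM Hact), <- !word_eval_app,
    app_assoc, <- Ewu, <- Ew', (actM Hact) in Hfar_w'.
  rewrite gromov_sym in Hfar_p.
  pose proof (hyperbolic_gromov_gt Hhyp Hfar_p Hfar_w'). lra.
Qed.
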